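(* Consider a family, indexed by the number of qubits $n$, of parametrized $n$-qubit states $\rho(\vec{\alpha})$ depending on a random variable $\vec{\alpha}$, and a POVM $\mathcal{M} = \{M_k\}_{k=1}^{|\mathcal{M}|}$ with $|\mathcal{M}| \in \mathcal{O}(\operatorname{poly}(n))$, with outcome distribution $\mathbb{P}_{\vec{\alpha}} = (p_k(\vec{\alpha}))_k$, $p_k(\vec{\alpha}) = \operatorname{Tr}[\rho(\vec{\alpha}) M_k]$. Assume there exist $\vec{\alpha}$-independent numbers $\mu_k$ and $\beta \in \mathcal{O}(\exp(-n))$ with $\Pr_{\vec{\alpha}}(|p_k(\vec{\alpha}) - \mu_k| \geq \delta') \leq \beta/\delta'^2$ for all $k$ and all $\delta'>0$, and set $\mathbb{P}_{\rm fixed} = (\mu_1,\dots,\mu_{|\mathcal{M}|})$. Let $N \in \mathcal{O}(\operatorname{poly}(n))$, let $\Phi : \mathbb{R}^N \to \mathbb{R}^M$ be an arbitrary map, and let $\mathcal{S}_N(\vec{\alpha})$ and $\mathcal{S}_{N,\rm fixed}$ be sets of $N$ i.i.d. samples from $\mathbb{P}_{\vec{\alpha}}$ and from $\mathbb{P}_{\rm fixed}$ respectively. Then, with probability at least $1-\delta$ over $\vec{\alpha}$, with $\delta \in \mathcal{O}(\exp(-n))$, the outputs $\Phi(\mathcal{S}_N(\vec{\alpha}))$ and $\Phi(\mathcal{S}_{N,\rm fixed})$ are statistically indistinguishable: given $\Phi(\mathcal{S})$ for a sample set $\mathcal{S}$ drawn with equal probability from one of the two sources, no procedure identifies the source with probability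 exceeding that achievable from $\mathcal{S}$ itself, which is at most $\frac12 + \frac{N|\mathcal{M}|\beta^{1/4}}{4}$.
   Context: A POVM is a finite set of positive semidefinite operators summing to the identity; measuring it on $\rho$ yields outcome $k$ with probability $\operatorname{Tr}[\rho M_k]$ (outcomes are labeled by real numbers). Two distributions are statistically indistinguishable with $N$ samples if, given $N$ i.i.d. samples drawn (with equal prior probability) all from one or all from the other, no algorithm identifies the correct source with probability greater than $0.51$; outputs of a map applied to sample sets from two such distributions are called statistically indistinguishable outputs. *)

From mathcomp Require Import all_boot all_order all_algebra.
From mathcomp Require Import all_classical all_reals all_analysis.
From mathcomp Require Import complex.
Set Implicit Arguments. Unset Strict Implicit. Unset Printing Implicit Defensive.
Import Order.TTheory GRing.Theory Num.Theory.
Local Open Scope ring_scope.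

Section Defs.
Variable R : realType.

Definition adjmx (d1 d2 : nat) (A : 'M[R[i]]_(d1, d2)) : 'M[R[i]]_(d2, d1) :=
  (map_mx conjc A)^T.

(** positive semidefinite: <v, A v> is real and nonnegative for every v
    (in a numClosedField, [0 <= z] means z is real and nonnegative) *)
Definition psd (d : nat) (A : 'M[R[i]]_d) : Prop :=
  forall v : 'cV[R[i]]_d, 0 <= (adjmx v *m A *m v) 0 0.

Definition is_state (d : nat) (rho : 'M[R[i]]_d) : Prop :=
  psd rho /\ \tr rho = 1.

Definition is_povm (d m : nat) (M : 'I_m -> 'M[R[i]]_d) : Prop :=
  (forall k, psd (M k)) /\ \sum_(k < m) M k = 1%:M.

(** Born rule: Tr[rho M_k] (a real number for a state and a POVM element) *)
Definition born (d : nat) (rho E : 'M[R[i]]_d) : R := complex.Re (\tr (rho *m E)).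

Definition outcome_distr (d m : nat) (rho : 'M[R[i]]_d) (M : 'I_m -> 'M[R[i]]_d)
  : 'I_m -> R := fun k => born rho (M k).

Definition is_distr (m : nat) (q : 'I_m -> R) : Prop :=
  (forall k, 0 <= q k) /\ \sum_(k < m) q k = 1.

Definition iid_prob (m N : nat) (q : 'I_m -> R) (s : {ffun 'I_N -> 'I_m}) : R :=
  \prod_(j < N) q (s j).

Definition sample_vec (m N : nat) (lab : 'I_m -> R) (s : {ffun 'I_N -> 'I_m})
  : 'rV[R]_N := \row_(j < N) lab (s j).

(** A (possibly randomized) distinguishing procedure acting on the output
    y of the map Phi: it answers "source 1" with probability g y. *)
Definition decision_rule (Y : Type) (g : Y -> R) : Prop :=
  forall y, 0 <= g y <= 1.

Definition success_prob (m N : nat) (Y : Type) (lab : 'I_m -> R)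
  (q1 q2 : 'I_m -> R) (Phi : 'rV[R]_N -> Y) (g : Y -> R) : R :=
  2^-1 * (\sum_(s : {ffun 'I_N -> 'I_m}) iid_prob q1 s * g (Phi (sample_vec lab s)))
  + 2^-1 * (\sum_(s : {ffun 'I_N -> 'I_m}) iid_prob q2 s * (1 - g (Phi (sample_vec lab s)))).

Definition stat_indist_outputs (m N : nat) (Y : Type) (lab : 'I_m -> R)
  (q1 q2 : 'I_m -> R) (Phi : 'rV[R]_N -> Y) : Prop :=
  forall g : Y -> R, decision_rule g ->
    success_prob lab q1 q2 Phi g <= 51 / 100.

Definition poly_bounded (f : nat -> nat) : Prop :=
  exists c k : nat, forall n, (f n <= c * n ^ k + c)%N.

(** f(n) in O(exp(-n)), read as "exponentially small": |f n| <= C exp(-c n)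
    for some constants C and c > 0 *)
Definition exp_small (f : nat -> R) : Prop :=
  exists c C : R, 0 < c /\ forall n, `|f n| <= C * expR (- (c * n%:R)).

End Defs.

(* On the event that every outcome probability p_k(alpha) lies within
   b = beta^(1/4) of mu_k, the two outcome distributions are at l1-distance at
   most |M| b; by Chebyshev's bound and a union bound this event has
   probability at least 1 - |M| b^2.  Telescoping a product of N factors, the
   distributions of N i.i.d. samples are then at l1-distance at most N |M| b,
   and no decision rule, whatever it is applied to, succeeds with probability
   above 1/2 + (l1-distance)/4.  As beta is exponentially small while N and |M|
   grow polynomially, both |M| b^2 and N |M| b are exponentially small. *)

From mathcomp Require Import all_boot all_order all_algebra.
From mathcomp Require Import all_classical all_reals all_analysis.
From mathcomp Require Import complex.
From mathcomp Require Import ring lra.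
Import Order.TTheory GRing.Theory Num.Theory.

Set Implicit Arguments. Unset Strict Implicit. Unset Printing Implicit Defensive.
Local Open Scope ring_scope.

Section iid_samples.
Variable R : realType.

Lemma distr_card_gt0 m (q : 'I_m -> R) : is_distr q -> (0 < m)%N.
Proof. by case: m q => // q [_]; rewrite big_ord0 => /eqP; rewrite eq_sym oner_eq0. Qed.

Definition hybrid n (x y : 'I_n -> R) (i j : 'I_n) : R :=
  if (j < i)%N then x j else if j == i then x j - y j else y j.

Lemma prodrB_hybrid n (x y : 'I_n -> R) :
  \prod_j x j - \prod_j y j = \sum_i \prod_j hybrid x y i j.
Proof.
elim: n x y => [|n IH] x y; first by rewrite !big_ord0 subrr.
rewrite big_ord_recr /= !big_ord_recr /=.
have -> : \prod_(j < n) hybrid x y ord_max (widen_ord (leqnSn n) j)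
          = \prod_(j < n) x (widen_ord (leqnSn n) j).
  by apply: eq_bigr => j _; rewrite /hybrid /= ltn_ord.
have -> : \sum_(i < n) \prod_(j < n.+1) hybrid x y (widen_ord (leqnSn n) i) j
   = (\prod_(j < n) x (widen_ord (leqnSn n) j)
      - \prod_(j < n) y (widen_ord (leqnSn n) j)) * y ord_max.
  rewrite IH mulr_suml; apply: eq_bigr => i _; rewrite big_ord_recr /=.
  by congr (_ * _); rewrite /hybrid /= ltnNge (ltnW (ltn_ord i)) -val_eqE /= gtn_eqF.
by rewrite /hybrid /= ltnn eqxx; ring.
Qed.

Lemma sum_iid_prob m N (q : 'I_m -> R) :
  \sum_k q k = 1 -> \sum_(s : {ffun 'I_N -> 'I_m}) iid_prob q s = 1.
Proof.
by move=> q1; rewrite -(bigA_distr_bigA (fun _ => q)) big1 // => j _.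
Qed.

Lemma sum_iid_probB_le m N (q1 q2 : 'I_m -> R) :
  is_distr q1 -> is_distr q2 ->
  \sum_(s : {ffun 'I_N -> 'I_m}) `|iid_prob q1 s - iid_prob q2 s|
    <= N%:R * \sum_k `|q1 k - q2 k|.
Proof.
move=> [q1_ge0 q1_sum] [q2_ge0 q2_sum].
pose G (i j : 'I_N) :=
  if (j < i)%N then q1 else if j == i then fun k => `|q1 k - q2 k| else q2.
have iid_probB_le s : `|iid_prob q1 s - iid_prob q2 s| <= \sum_i \prod_j G i j (s j).
  rewrite (prodrB_hybrid (fun j => q1 (s j)) (fun j => q2 (s j))).
  apply: le_trans (ler_norm_sum _ _ _) _; apply: ler_sum => i _.
  rewrite normr_prod; apply: ler_prod => j _; rewrite normr_ge0 /hybrid /G /=.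
  case: ifP => _; first by rewrite ger0_norm.
  by case: ifP => _; last rewrite ger0_norm.
have sum_G i : \prod_j \sum_k G i j k = \sum_k `|q1 k - q2 k|.
  rewrite (bigD1 i) //= [X in _ * X]big1 ?mulr1 => [|j ji].
    by apply: eq_bigr => k; rewrite /G ltnn eqxx.
  by rewrite /G (negbTE ji); case: ifP.
apply: le_trans (ler_sum _ (fun s _ => iid_probB_le s)) _.
rewrite exchange_big /=.
under eq_bigr do rewrite -(bigA_distr_bigA (G _)) sum_G.
by rewrite sumr_const card_ord mulr_natl.
Qed.

Lemma success_probE m N Y (lab : 'I_m -> R) (q1 q2 : 'I_m -> R)
    (Phi : 'rV[R]_N -> Y) (g : Y -> R) :
  \sum_k q1 k = 1 -> \sum_k q2 k = 1 ->
  success_prob lab q1 q2 Phi g = 2^-1 + 2^-1 *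
    \sum_(s : {ffun 'I_N -> 'I_m})
      (iid_prob q1 s - iid_prob q2 s) * (g (Phi (sample_vec lab s)) - 2^-1).
Proof.
move=> /(sum_iid_prob N) q1_sum /(sum_iid_prob N) q2_sum.
rewrite /success_prob; set G := fun s => g (Phi (sample_vec lab s)).
set Q1 := iid_prob q1 in q1_sum *; set Q2 := iid_prob q2 in q2_sum *.
have -> : \sum_s (Q1 s - Q2 s) * (G s - 2^-1) =
    \sum_s (Q1 s * G s - Q2 s * G s - 2^-1 * Q1 s + 2^-1 * Q2 s).
  by apply: eq_bigr => s _; ring.
have -> : \sum_s Q2 s * (1 - G s) = \sum_s (Q2 s - Q2 s * G s).
  by apply: eq_bigr => s _; ring.
rewrite !big_split /= !sumrN -!mulr_sumr q1_sum q2_sum; ring.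
Qed.

Lemma success_prob_le m N Y (lab : 'I_m -> R) (q1 q2 : 'I_m -> R)
    (Phi : 'rV[R]_N -> Y) (g : Y -> R) :
  is_distr q1 -> is_distr q2 -> decision_rule g ->
  success_prob lab q1 q2 Phi g <= 2^-1 + N%:R * (\sum_k `|q1 k - q2 k|) / 4.
Proof.
move=> q1_distr q2_distr g01.
rewrite success_probE ?q1_distr.2 ?q2_distr.2 // lerD2l.
have -> : N%:R * (\sum_k `|q1 k - q2 k|) / 4
    = 2^-1 * ((N%:R * \sum_k `|q1 k - q2 k|) * 2^-1) by field.
rewrite ler_pM2l ?invr_gt0 ?ltr0n //.
apply: le_trans (_ : _ <= \sum_s `|iid_prob q1 s - iid_prob q2 s| * 2^-1) _.
  apply: ler_sum => s _; apply: le_trans (ler_norm _) _; rewrite normrM ler_wpM2l //.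
  have /andP[g_ge0 g_le1] := g01 (Phi (sample_vec lab s)).
  by rewrite ler_norml; apply/andP; split; lra.
by rewrite -mulr_suml ler_wpM2r ?invr_ge0 ?ler0n // sum_iid_probB_le.
Qed.
End iid_samples.

Section born_rule.
Variable R : realType.
Local Notation C := R[i].

Lemma conjc_eq_of_form_ge0 (x y z w : C) :
  0 <= x -> 0 <= w -> 0 <= x + y + z + w ->
  0 <= x + 'i * y + conjc 'i * z + conjc 'i * 'i * w -> z = conjc y.
Proof.
case: x => a1 b1; case: y => a2 b2; case: z => a3 b3; case: w => a4 b4.
rewrite !lecE /= => /andP[/eqP h1 _] /andP[/eqP h2 _] /andP[/eqP h3 _] /andP[/eqP h4 _].
congr Complex; lra.
Qed.

Lemma adjmxD d1 d2 (A B : 'M[C]_(d1, d2)) : adjmx (A + B) = adjmx A + adjmx B.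
Proof. by apply/matrixP => i j; rewrite !mxE rmorphD. Qed.

Lemma adjmxZ d1 d2 c (A : 'M[C]_(d1, d2)) : adjmx (c *: A) = conjc c *: adjmx A.
Proof. by apply/matrixP => i j; rewrite !mxE rmorphM. Qed.

Lemma adjmxK d1 d2 (A : 'M[C]_(d1, d2)) : adjmx (adjmx A) = A.
Proof. by apply/matrixP => i j; rewrite !mxE conjcK. Qed.

Lemma adjmx_delta d (i : 'I_d) : adjmx (delta_mx i 0 : 'cV[C]_d) = delta_mx 0 i.
Proof. by apply/matrixP => a b; rewrite !mxE conjc_nat andbC. Qed.

Lemma form_delta d (E : 'M[C]_d) (i j : 'I_d) :
  (adjmx (delta_mx i 0 : 'cV[C]_d) *m E *m (delta_mx j 0 : 'cV[C]_d)) 0 0 = E i j.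
Proof. by rewrite adjmx_delta -(rowE i) -(colE j) !mxE. Qed.

Lemma form_deltaD d (E : 'M[C]_d) (i j : 'I_d) (c : C) :
  let v : 'cV[C]_d := delta_mx i 0 + c *: delta_mx j 0 in
  (adjmx v *m E *m v) 0 0 =
    E i i + c * E i j + conjc c * E j i + conjc c * c * E j j.
Proof.
rewrite /= adjmxD adjmxZ !mulmxDl !mulmxDr -!scalemxAl -!scalemxAr.
rewrite -(form_delta E i i) -(form_delta E i j) -(form_delta E j i).
by rewrite -(form_delta E j j) !mxE; ring.
Qed.

Lemma psd_conj d (E : 'M[C]_d) : psd E -> forall i j, E j i = conjc (E i j).
Proof.
move=> E_psd i j; apply: (@conjc_eq_of_form_ge0 (E i i) _ _ (E j j)).
- by have := E_psd (delta_mx i 0); rewrite form_delta.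
- by have := E_psd (delta_mx j 0); rewrite form_delta.
- have := E_psd (delta_mx i 0 + 1 *: delta_mx j 0).
  by rewrite form_deltaD conjc1 !mul1r.
- by have := E_psd (delta_mx i 0 + 'i *: delta_mx j 0); rewrite form_deltaD.
Qed.

Local Open Scope sesquilinear_scope.

Lemma trmxC_adjmx d1 d2 (A : 'M[C]_(d1, d2)) : A ^t* = adjmx A.
Proof. by apply/matrixP => a b; rewrite !mxE. Qed.

Lemma psd_normalmx d (E : 'M[C]_d) : psd E -> E \is normalmx.
Proof.
move=> E_psd; have E_herm : E ^t* = E.
  by apply/matrixP => a b; rewrite trmxC_adjmx !mxE -psd_conj.
by apply/normalmxP; rewrite E_herm.
Qed.

Lemma conjmx_diag_form d (P Y : 'M[C]_d) i :
  let v := adjmx (row i P) in (P *m Y *m P ^t*) i i = (adjmx v *m Y *m v) 0 0.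
Proof.
rewrite /= adjmxK -trmxC_adjmx.
have -> : (row i P) ^t* = col i (P ^t*) by apply/matrixP => a b; rewrite !mxE.
rewrite (colE i (P ^t*)) mulmxA -(colE i (row i P *m Y *m P ^t*)) -!row_mul.
by rewrite !mxE.
Qed.

Lemma psd_mxtrace_mul_ge0 d (X E : 'M[C]_d) : psd X -> psd E -> 0 <= \tr (X *m E).
Proof.
move=> X_psd E_psd; have /orthomx_spectralP E_spectral := psd_normalmx E_psd.
set P := spectralmx E in E_spectral; set D := spectral_diag E in E_spectral.
have P_unitary : P \is unitarymx := spectral_unitarymx E.
have invP : invmx P = P ^t* := invmx_unitary P_unitary.
have PPt : P *m P ^t* = 1%:M by apply/unitarymxP.
have PEP : P *m E *m P ^t* = diag_mx D.
  by rewrite E_spectral invP !mulmxA PPt mul1mx -!mulmxA PPt mulmx1.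
rewrite E_spectral invP !mulmxA mxtrace_mulC !mulmxA mul_mx_diag /mxtrace.
apply: sumr_ge0 => k _; rewrite mxE; apply: mulr_ge0.
  by rewrite conjmx_diag_form; apply: X_psd.
have -> : D 0 k = (P *m E *m P ^t*) k k by rewrite PEP mxE eqxx mulr1n.
by rewrite conjmx_diag_form; apply: E_psd.
Qed.

Lemma born_ge0 d (X E : 'M[C]_d) : psd X -> psd E -> 0 <= born X E.
Proof.
by move=> X_psd E_psd; have := psd_mxtrace_mul_ge0 X_psd E_psd; rewrite lecE => /andP[].
Qed.

Lemma sum_born d m (X : 'M[C]_d) (M : 'I_m -> 'M[C]_d) :
  \tr X = 1 -> \sum_(k < m) M k = 1%:M -> \sum_(k < m) born X (M k) = 1.
Proof.
move=> trX M_sum; rewrite /born.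
have Re_sum (r : seq 'I_m) (F : 'I_m -> C) :
    complex.Re (\sum_(k <- r) F k) = \sum_(k <- r) complex.Re (F k).
  exact: (raddf_sum (@complex.Re R : Rcomplex R -> R)).
by rewrite -Re_sum -raddf_sum /= -mulmx_sumr M_sum mulmx1 trX.
Qed.

Lemma outcome_distr_is_distr d m (rho : 'M[C]_d) (M : 'I_m -> 'M[C]_d) :
  is_state rho -> is_povm M -> is_distr (outcome_distr rho M).
Proof.
move=> [rho_psd rho_tr] [M_psd M_sum]; split => [k|]; first exact: born_ge0.
exact: sum_born.
Qed.

End born_rule.

Local Open Scope classical_set_scope.

Section tail_bounds.
Variables (R : realType) (d : measure_display) (T : measurableType d).
Implicit Types (g : T -> R) (t x : R).

Lemma measurable_superlevel g x :
  measurable_fun setT g -> measurable [set a | x <= g a].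
Proof.
by move=> g_meas; rewrite -preimage_itvcy -[_ @^-1` _]setTI; exact: g_meas.
Qed.

Lemma measurable_strict_superlevel g x :
  measurable_fun setT g -> measurable [set a | x < g a].
Proof.
by move=> g_meas; rewrite -preimage_itvoy -[_ @^-1` _]setTI; exact: g_meas.
Qed.

Lemma measure_gt_le (mu : {measure set T -> \bar R}) g t (c : \bar R) :
  measurable_fun setT g -> (forall x, t < x -> (mu [set a | x <= g a]%R <= c)%E) ->
  (mu [set a | t < g a]%R <= c)%E.
Proof.
move=> g_meas g_tail.
pose F n := [set a | t + n.+1%:R^-1 <= g a].
have F_meas n : measurable (F n) by exact: measurable_superlevel.
have F_bigcup : \bigcup_n F n = [set a | t < g a].
  apply/seteqP; split => [a [n _ /=]|a /= t_lt].
    by apply: lt_le_trans; rewrite ltrDl invr_gt0.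
  have [n n_gt] : exists n, (g a - t)^-1 < n.+1%:R.
    by exists (Num.truncn (g a - t)^-1); exact: truncnS_gt.
  exists n => //; rewrite /F /= -lerBrDl.
  by rewrite -[g a - t]invrK lef_pV2 ?posrE ?invr_gt0 ?subr_gt0 ?ltW.
have F_nd : nondecreasing_seq F.
  move=> n k n_le_k; apply/subsetPset => a /=; apply: le_trans.
  by rewrite lerD2l lef_pV2 ?posrE // ler_nat.
have F_cvg := @nondecreasing_cvg_mu _ _ _ mu F F_meas
  (bigcup_measurable (fun n _ => F_meas n)) F_nd.
rewrite -F_bigcup -(cvg_lim _ F_cvg) //; apply: lime_le; first exact: (cvgP _ F_cvg).
by apply: nearW => n; apply: g_tail; rewrite ltrDl invr_gt0.
Qed.

Lemma prob_forall_le (P : probability T R) m (f : 'I_m -> T -> R) t (c : R) :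
  (forall k, measurable_fun setT (f k)) ->
  (forall k, (P [set a | t < f k a]%R <= c%:E)%E) ->
  measurable [set a | forall k, f k a <= t] /\
  ((1 - m%:R * c)%:E <= P [set a | forall k, f k a <= t]%R)%E.
Proof.
move=> f_meas f_tail; set A := [set a | forall k, f k a <= t].
(* Boole_inequality is stated for nat-indexed families. *)
pose B i := if insub i is Some k then [set a | t < f k a] else set0.
have B_meas i : measurable (B i).
  by rewrite /B; case: insub => [k|]; [exact: measurable_strict_superlevel|].
have AC : ~` A = \big[setU/set0]_(i < m) B i.
  rewrite -bigcup_mkord; apply/seteqP; split => a /=.
  - move=> /existsNP [k /negP]; rewrite -ltNge => tk.
    by exists (val k); rewrite /= ?ltn_ord // /B valK.
  - move=> [i /= im]; rewrite /B insubT /= => tk /(_ (Ordinal im)).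
    by rewrite leNgt tk.
have A_meas : measurable A.
  by rewrite -(setCK A) AC; apply/measurableC/bigsetU_measurable => i _.
split => //; rewrite -(setCK A) probability_setC; last exact: measurableC.
rewrite AC.
have union_le : (P (\big[setU/set0]_(i < m) B i) <= (m%:R * c)%:E)%E.
  apply: le_trans (Boole_inequality P (fun i _ => B_meas i)) _.
  have -> : (m%:R * c)%:E = (\sum_(i < m) c%:E)%E.
    by rewrite sumEFin sumr_const card_ord mulr_natl.
  by apply: lee_sum => i _; rewrite /B valK; exact: f_tail.
by rewrite EFinB; apply: leeB.
Qed.

End tail_bounds.

Section exponential_smallness.
Variable R : realType.
Implicit Types (f g : nat -> R) (e x : R).

Lemma powR_invnK (a : R) n : 0 <= a -> (a `^ n.+1%:R^-1) ^+ n.+1 = a.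
Proof.
by move=> a_ge0; rewrite -powR_mulrn ?powR_ge0 // -powRrM mulVf ?powRr1.
Qed.

Lemma quartic_tail_le (beta x : R) : 0 <= beta -> beta `^ 4^-1 < x ->
  beta / x ^+ 2 <= (beta `^ 4^-1) ^+ 2.
Proof.
move=> beta_ge0; set b := beta `^ 4^-1 => b_lt_x.
have b_ge0 : 0 <= b by exact: powR_ge0.
have x_gt0 : 0 < x by exact: le_lt_trans b_lt_x.
rewrite ler_pdivrMr ?exprn_gt0 // -{1}(@powR_invnK beta 3) // -/b.
rewrite (_ : 4 = 2 + 2)%N // exprD; apply: ler_wpM2l; first exact: exprn_ge0.
by apply: lerXn2r; rewrite ?nnegrE //; exact: ltW.
Qed.

Lemma exprn_le_fact_expR x k : 0 <= x -> x ^+ k <= k`!%:R * expR x.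
Proof.
move=> x_ge0; case: k => [|k]; first by rewrite expr0 mul1r -expR0 ler_expR.
have : x ^+ k.+1 / k.+1`!%:R <= expR x.
  by apply: le_trans (expR_ge1Dxn k x_ge0); rewrite lerDr.
by rewrite ler_pdivrMr ?ltr0n ?fact_gt0 // mulrC.
Qed.

Lemma exprn_expRN_bounded e k : 0 < e ->
  exists K, forall x, 0 <= x -> x ^+ k * expR (- (e * x)) <= K.
Proof.
move=> e_gt0; exists (k`!%:R / e ^+ k) => x x_ge0.
have ek_gt0 : 0 < e ^+ k by rewrite exprn_gt0.
have -> : x ^+ k = (e * x) ^+ k / e ^+ k by rewrite exprMn mulrAC divff ?mul1r ?gt_eqF.
rewrite mulrAC ler_pM2r ?invr_gt0 // expRN ler_pdivrMr ?expR_gt0 //.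
by apply/exprn_le_fact_expR/mulr_ge0 => //; exact: ltW.
Qed.

Lemma exp_small_bound_ge0 f c C :
  (forall n, `|f n| <= C * expR (- (c * n%:R))) -> 0 <= C.
Proof. by move/(_ 0%N); rewrite mulr0 oppr0 expR0 mulr1; apply: le_trans. Qed.

Lemma exp_smallM f g :
  exp_small f -> exp_small g -> exp_small (fun n => f n * g n).
Proof.
move=> [cf [Cf [cf_gt0 f_le]]] [cg [Cg [cg_gt0 g_le]]].
exists (cf + cg), (Cf * Cg); split => [|n]; first exact: addr_gt0.
have Cf_ge0 := exp_small_bound_ge0 f_le.
have -> : - ((cf + cg) * n%:R) = - (cf * n%:R) + - (cg * n%:R) by ring.
rewrite normrM expRD mulrACA.
by apply: ler_pM => //; rewrite ?normr_ge0.
Qed.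

Lemma exp_small_powR f r : 0 < r -> (forall n, 0 <= f n) ->
  exp_small f -> exp_small (fun n => f n `^ r).
Proof.
move=> r_gt0 f_ge0 [c [C [c_gt0 f_le]]].
exists (c * r), (C `^ r); split => [|n]; first exact: mulr_gt0.
have C_ge0 := exp_small_bound_ge0 f_le.
rewrite ger0_norm ?powR_ge0 // mulrAC -mulNr expRM -powRM ?expR_ge0 //.
apply: ge0_ler_powR; rewrite ?nnegrE ?mulr_ge0 ?expR_ge0 ?f_ge0 //; first exact: ltW.
by rewrite -(ger0_norm (f_ge0 n)).
Qed.

Lemma exp_small_polyMl (f : nat -> nat) g :
  poly_bounded f -> exp_small g -> exp_small (fun n => (f n)%:R * g n).
Proof.
move=> [a [k f_le]] [c [C [c_gt0 g_le]]].
have c2_gt0 : 0 < c / 2 by rewrite divr_gt0.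
have [K K_bound] := exprn_expRN_bounded k c2_gt0.
exists (c / 2), (a%:R * C * (K + 1)); split => // n.
have C_ge0 := exp_small_bound_ge0 g_le.
set u := expR (- (c / 2 * n%:R)).
have u_le1 : u <= 1 by rewrite expR_le1 oppr_le0 pmulr_rge0.
have expR_split : expR (- (c * n%:R)) = u * u.
  by rewrite /u -expRD; congr expR; field.
have nku_le : n%:R ^+ k * u + u <= K + 1 by apply: lerD => //; exact: K_bound.
rewrite normrM normr_nat.
apply: le_trans (_ : _ <= (a * n ^ k + a)%:R * (C * (u * u))) _.
  by rewrite -expR_split ler_pM ?ler_nat.
have -> : (a * n ^ k + a)%:R * (C * (u * u)) = a%:R * C * (n%:R ^+ k * u + u) * u.
  by rewrite natrD natrM natrX; ring.
by rewrite ler_wpM2r ?expR_ge0 // ler_wpM2l ?mulr_ge0.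
Qed.

Lemma exp_small_eventually_le f eps : exp_small f -> 0 < eps ->
  exists n0, forall n, (n0 <= n)%N -> `|f n| <= eps.
Proof.
move=> [c [C [c_gt0 f_le]]] eps_gt0; exists (Num.truncn (C / (c * eps))).+1 => n n0_le.
have C_ge0 := exp_small_bound_ge0 f_le.
have n_gt : C / (c * eps) < n%:R.
  by apply: lt_le_trans (truncnS_gt _) _; rewrite ler_nat.
apply: le_trans (f_le n) _; rewrite expRN ler_pdivrMr ?expR_gt0 //.
apply: le_trans (_ : eps * (1 + c * n%:R) <= _).
  by move: n_gt; rewrite ltr_pdivrMr ?mulr_gt0 // => /ltW n_gt; nra.
by rewrite ler_wpM2l ?expR_ge1Dx ?ltW.
Qed.

End exponential_smallness.

Section close_parameters.
Variables (R : realType) (d : measure_display) (T : measurableType d).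
Variables (P : probability T R) (dim m : nat) (rho : T -> 'M[R[i]]_dim).
Variables (M : 'I_m -> 'M[R[i]]_dim) (mu : 'I_m -> R) (beta : R).
Hypothesis mu_distr : is_distr mu.
Hypothesis born_meas : forall k, measurable_fun setT (fun a => born (rho a) (M k)).
Hypothesis born_tail : forall k x, 0 < x ->
  (P [set a | x <= `|born (rho a) (M k) - mu k|]%R <= (beta / x ^+ 2)%:E)%E.

(* The threshold b = beta^(1/4) turns the Chebyshev bound beta / b^2 into b^2. *)
Definition close_params : set T :=
  [set a | forall k, `|born (rho a) (M k) - mu k| <= beta `^ 4^-1].

Lemma tail_param_ge0 : 0 <= beta.
Proof.
have := born_tail (Ordinal (distr_card_gt0 mu_distr)) ltr01.
by rewrite expr1n divr1 -lee_fin; apply: le_trans; exact: measure_ge0.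
Qed.

Lemma close_params_prob : measurable close_params /\
  ((1 - m%:R * (beta `^ 4^-1) ^+ 2)%:E <= P close_params)%E.
Proof.
have dev_meas k : measurable_fun setT (fun a => `|born (rho a) (M k) - mu k|).
  apply: measurableT_comp (@measurable_realfun.normr_measurable R setT) _.
  exact: measurable_realfun.measurable_funB.
apply: prob_forall_le => // k; apply: measure_gt_le => // x b_lt_x.
apply: le_trans (born_tail k (le_lt_trans (powR_ge0 _ _) b_lt_x)) _.
by rewrite lee_fin quartic_tail_le ?tail_param_ge0.
Qed.

Lemma success_prob_close_params a N Y (lab : 'I_m -> R) (Phi : 'rV[R]_N -> Y)
    (g : Y -> R) :
  is_state (rho a) -> is_povm M -> close_params a -> decision_rule g ->
  success_prob lab (outcome_distr (rho a) M) mu Phi g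
    <= 2^-1 + N%:R * m%:R * beta `^ 4^-1 / 4.
Proof.
move=> rho_state M_povm a_close g01.
have q_distr := outcome_distr_is_distr rho_state M_povm.
apply: le_trans (success_prob_le _ _ q_distr mu_distr g01) _.
rewrite lerD2l ler_wpM2r // -mulrA ler_wpM2l //.
apply: le_trans (ler_sum _ (fun k _ => a_close k)) _.
by rewrite sumr_const card_ord mulr_natl.
Qed.

End close_parameters.

Theorem corollary3
  (R : realType)
  (* probability space of the random parameters alpha, for each n *)
  (disp : nat -> measure_display) (T : forall n, measurableType (disp n))
  (P : forall n, probability (T n) R)
  (* parametrized n-qubit states *)
  (rho : forall n, T n -> 'M[R[i]]_(2 ^ n))
  (* POVM with m n outcomes, real outcome labels lab n *)
  (m : nat -> nat) (Mv : forall n, 'I_(m n) -> 'M[R[i]]_(2 ^ n))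
  (lab : forall n, 'I_(m n) -> R)
  (mu : forall n, 'I_(m n) -> R) (beta : nat -> R)
  (N : nat -> nat) (Mout : nat -> nat)
  (Phi : forall n, 'rV[R]_(N n) -> 'rV[R]_(Mout n)) :
  (forall n a, is_state (rho n a)) ->
  (forall n, is_povm (Mv n)) ->
  poly_bounded m ->
  (forall n k, measurable_fun setT (fun a => born (rho n a) (Mv n k))) ->
  (forall n, is_distr (mu n)) ->
  exp_small beta ->
  (forall n k (d' : R), 0 < d' ->
     (P n [set a | (d' <= `|born (rho n a) (Mv n k) - mu n k|)%R]
       <= (beta n / d' ^+ 2)%:E)%E) ->
  poly_bounded N ->
  exists delta : (nat -> R), exp_small delta /\
  exists n0 : nat, forall n,
    exists A : set (T n), measurable A /\ (((1 - delta n)%R)%:E <= P n A)%E /\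
    forall a, A a ->
      (forall g : ('rV[R]_(Mout n) -> R), decision_rule g ->
         success_prob (lab n) (outcome_distr (rho n a) (Mv n)) (mu n) (Phi n) g
           <= 2^-1 + (N n)%:R * (m n)%:R * powR (beta n) (4^-1) / 4) /\
      (leq n0 n -> stat_indist_outputs (lab n) (outcome_distr (rho n a) (Mv n)) (mu n) (Phi n)).
Proof.
move=> rho_state M_povm m_poly born_meas mu_distr beta_small tail N_poly.
pose b n := beta n `^ 4^-1.
have b_small : exp_small b.
  by apply: exp_small_powR => // n; exact: tail_param_ge0 (mu_distr n) (tail n).
exists (fun n => (m n)%:R * b n ^+ 2); split.
  by apply: exp_small_polyMl => //; exact: exp_smallM.
(* 1/2 + x/4 <= 51/100 as soon as x <= 1/25. *)
have [n0 n0_le] : exists n0, forall n, (n0 <= n)%N ->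
    `|(N n)%:R * ((m n)%:R * b n)| <= 1 / 25.
  apply: exp_small_eventually_le; last by rewrite divr_gt0.
  by do 2 apply: exp_small_polyMl => //.
exists n0 => n.
have [A_meas A_prob] := close_params_prob (mu_distr n) (born_meas n) (tail n).
exists (close_params (rho n) (Mv n) (mu n) (beta n)); do 2 split => //.
move=> a a_close; have success_le g := success_prob_close_params (mu_distr n)
  (lab n) (Phi n) (rho_state n a) (M_povm n) a_close (g := g).
split => // n0_n g g01; apply: le_trans (success_le g g01) _.
have := n0_le n n0_n; rewrite /b ger0_norm ?mulr_ge0 ?powR_ge0 // mulrA; lra.
Qed.
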